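(* Let $N\in\mathbb N$ and let $\Pi$ be a set of two-coloured partitions containing the four mixed-coloured pair partitions. Let $x=(x_1,\dots,x_N)^T$ be the generators of $C(X_N(\Pi))$ and $u=(u_{ij})$ the fundamental matrix of $G_N(\Pi)$. Then $x_i\mapsto u_{i1}$, $1\le i\le N$, defines a unital $*$-homomorphism $C(X_N(\Pi))\to C(G_N(\Pi))$.
   Context: $[n]:=\{1,\dots,n\}$; $[N]^0=\{\epsilon\}$. A two-coloured partition on $k$ upper and $l$ lower points is a partition of the $k$ upper and $l$ lower points (each row ordered left to right) into non-empty disjoint blocks, each point coloured $1$ (white) or $*$ (black); $\mathcal P(\omega,\omega')$ denotes those with upper colour word $\omega\in\{1,*\}^k$ and lower colour word $\omega'\in\{1,*\}^l$. A through-block contains upper and lower points; $tb(p)$ is their number. A row labeling (labels left to right in $[N]$) is valid if points of that row in a common block carry equal labels; $\epsilon$ is valid. Decomposition of labelings of $p$: $T_0$ (resp. $T'_0$) = invalid upper (resp. lower) row labelings; $r=N^{tb(p)}$; enumerate the assignments of labels in $[N]$ to the through-blocks as $1,\dots,r$; $T_i$ (resp. $T'_i$) = valid upper (resp. lower) row labelings giving each through-block the label of the $i$-th assignment. $a^1:=a$, $a^*$ = adjoint; empty products equal $\mathbb 1$. Mixed-coloured pair partitions: the four partitions consisting of a single block of two points of opposite colours, both in the upper row or both in the lower row. Relations $R^{Gr}_p(u)$ for an $N\times N$ matrix $u$ and $p\in\mathcal P(\omega,\omega')$: (i) $\sum_{t\in T_i}u_{t_1\gamma_1}^{\omega_1}\cdots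 u_{t_k\gamma_k}^{\omega_k}=\sum_{t'\in T'_j}u_{\gamma'_1t'_1}^{\omega'_1}\cdots u_{\gamma'_lt'_l}^{\omega'_l}$ for $1\le i,j\le r$, $\gamma\in T_j$, $\gamma'\in T'_i$; (ii) $\sum_{t\in T_i}u_{t_1\gamma_1}^{\omega_1}\cdots u_{t_k\gamma_k}^{\omega_k}=0$ for $\gamma\in T_0$, $1\le i\le r$; (iii) $\sum_{t'\in T'_j}u_{\gamma'_1t'_1}^{\omega'_1}\cdots u_{\gamma'_lt'_l}^{\omega'_l}=0$ for $\gamma'\in T'_0$, $1\le j\le r$. $C(G_N(\Pi))$ is the universal unital $C^*$-algebra generated by $u_{ij}$ ($1\le i,j\le N$) subject to $R^{Gr}_p(u)$ for all $p\in\Pi$ (easy quantum group $G_N(\Pi)$). Relations $R^{Sp}_p(x)$ for a vector $x=(x_1,\dots,x_N)$ and $p\in\mathcal P(\omega,\omega')$: $\sum_{t\in T_i}x_{t_1}^{\omega_1}\cdots x_{t_k}^{\omega_k}=\sum_{t'\in T'_i}x_{t'_1}^{\omega'_1}\cdots x_{t'_l}^{\omega'_l}$ for all $1\le i\le r$. $C(X_N(\Pi))$ is the universal unital $C^*$-algebra generated by $x_1,\dots,x_N$ subject to $R^{Sp}_p(x)$ for all $p\in\Pi$ (partition quantum space of one vector; it exists since the relations force $\sum_i x_ix_i^*=\mathbb 1$). *)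

From HB Require Import structures.
From mathcomp Require Import all_boot all_order all_algebra all_field.
Set Implicit Arguments. Unset Strict Implicit. Unset Printing Implicit Defensive.
Import GRing.Theory Num.Theory.
Local Open Scope ring_scope.

(* A two-coloured partition on tk upper and tl lower points.
   Points are 'I_(tk + tl): upper point a is lshift, lower point b is rshift.
   Two points lie in the same block iff tblk gives them the same label.
   Colour true = black ( * ), false = white (1). *)
Record tcpart := TCPart {
  tk : nat; tl : nat;
  tup : 'I_tk -> bool;
  tlo : 'I_tl -> bool;
  tblk : 'I_(tk + tl) -> nat }.
Arguments tblk : clear implicits.
Arguments tup : clear implicits.
Arguments tlo : clear implicits.

Definition upt (p : tcpart) (a : 'I_(tk p)) : 'I_(tk p + tl p) := lshift (tl p) a.
Definition lpt (p : tcpart) (b : 'I_(tl p)) : 'I_(tk p + tl p) := rshift (tk p) b.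

Definition sameblk (p : tcpart) (x y : 'I_(tk p + tl p)) : bool := tblk p x == tblk p y.
Arguments sameblk : clear implicits.

Definition through (p : tcpart) (x : 'I_(tk p + tl p)) : bool :=
  [exists a, sameblk p (upt a) x] && [exists b, sameblk p (lpt b) x].
Arguments through : clear implicits.

(* The four mixed-coloured pair partitions (canonical representatives). *)
Definition pair_up (c : 'I_2 -> bool) : tcpart := @TCPart 2 0 c (fun _ => false) (fun _ => 0%N).
Definition pair_lo (c : 'I_2 -> bool) : tcpart := @TCPart 0 2 (fun _ => false) c (fun _ => 0%N).
Definition col_wb (a : 'I_2) : bool := (a == 1 :> nat).
Definition col_bw (a : 'I_2) : bool := (a == 0 :> nat).

Section Labelings.
Variable N : nat.

Definition valid_up (p : tcpart) (t : {ffun 'I_(tk p) -> 'I_N}) : bool :=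
  [forall a, forall a', sameblk p (upt a) (upt a') ==> (t a == t a')].
Definition valid_lo (p : tcpart) (t : {ffun 'I_(tl p) -> 'I_N}) : bool :=
  [forall b, forall b', sameblk p (lpt b) (lpt b') ==> (t b == t b')].

(* An assignment of labels in [N] to the through-blocks, recorded pointwise:
   c x = Some l iff x is in a through-block labelled l. *)
Definition assignment (p : tcpart) (c : 'I_(tk p + tl p) -> option 'I_N) : Prop :=
  (forall x, (c x != None) = through p x) /\
  (forall x y, sameblk p x y -> c x = c y).

Definition inT_up (p : tcpart) c (t : {ffun 'I_(tk p) -> 'I_N}) : bool :=
  valid_up t && [forall a, through p (upt a) ==> (c (upt a) == Some (t a))].
Definition inT_lo (p : tcpart) c (t : {ffun 'I_(tl p) -> 'I_N}) : bool :=
  valid_lo t && [forall b, through p (lpt b) ==> (c (lpt b) == Some (t b))].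

End Labelings.
Arguments assignment {N} p c.
Arguments valid_up {N} p t.
Arguments valid_lo {N} p t.
Arguments inT_up {N} p c t.
Arguments inT_lo {N} p c t.

Definition is_star (A : algType algC) (star : A -> A) : Prop :=
  [/\ forall a b, star (a + b) = star a + star b,
      forall (l : algC) a, star (l *: a) = (l^*)%C *: star a,
      forall a b, star (a * b) = star b * star a,
      forall a, star (star a) = a & star 1 = 1].

Definition pw (A : algType algC) (star : A -> A) (b : bool) (a : A) : A :=
  if b then star a else a.

Definition RGr (A : algType algC) (star : A -> A) (N : nat)
    (u : 'I_N -> 'I_N -> A) (p : tcpart) : Prop :=
  let U (t g : {ffun 'I_(tk p) -> 'I_N}) := \prod_(a < tk p) pw star (tup p a) (u (t a) (g a)) in
  let L (g t : {ffun 'I_(tl p) -> 'I_N}) := \prod_(b < tl p) pw star (tlo p b) (u (g b) (t b)) in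
  [/\ (forall ci cj, assignment p ci -> assignment p cj ->
         forall (g : {ffun 'I_(tk p) -> 'I_N}) (g' : {ffun 'I_(tl p) -> 'I_N}),
         inT_up p cj g -> inT_lo p ci g' ->
         \sum_(t | inT_up p ci t) U t g = \sum_(t' | inT_lo p cj t') L g' t'),
      (forall g : {ffun 'I_(tk p) -> 'I_N}, ~~ valid_up p g ->
         forall ci, assignment p ci -> \sum_(t | inT_up p ci t) U t g = 0) &
      (forall g' : {ffun 'I_(tl p) -> 'I_N}, ~~ valid_lo p g' ->
         forall cj, assignment p cj -> \sum_(t' | inT_lo p cj t') L g' t' = 0)].

Definition RSp (A : algType algC) (star : A -> A) (N : nat)
    (x : 'I_N -> A) (p : tcpart) : Prop :=
  forall ci, assignment p ci ->
    \sum_(t : {ffun 'I_(tk p) -> 'I_N} | inT_up p ci t)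
        \prod_(a < tk p) pw star (tup p a) (x (t a))
    = \sum_(t' : {ffun 'I_(tl p) -> 'I_N} | inT_lo p ci t')
        \prod_(b < tl p) pw star (tlo p b) (x (t' b)).

From HB Require Import structures.
From mathcomp Require Import all_boot all_order all_algebra all_field.
Local Open Scope ring_scope.

(* Let joint_valid(t, s) say that the labels t of the upper row and s of the
   lower row are together constant on the blocks of p, and write u^w for the
   matrix u^w_(t,g) = prod_a u^(w_a)_(t_a, g_a).  Relations (i)-(iii) of
   R^Gr_p(u) are the three non-trivial cases of the single identity
     sum_t joint_valid(t, g') u^w_(t,g) = sum_s joint_valid(g, s) u^w'_(g',s),
   i.e. (u^w)^T T_p = T_p (u^w')^T for the 0/1-matrix T_p = joint_valid.  The
   mixed-coloured pair partitions make u and its entrywise adjoint unitary, so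
   u^w is a coisometry and u^w' an isometry, and conjugating the identity with
   them yields u^w T_p = T_p u^w'.
   Given an assignment c, let c1 label every through-block by 1.  The first
   identity at the column labelling (1,...,1) says that every row of u^w'
   restricted to T'_c x T'_c1 sums to the left-hand side of R^Sp_p(u_(.1)); the
   second one says that all columns have the same sum, which for the column
   (1,...,1) is the right-hand side.  Since all the sets T'_c have the same
   cardinality, double counting gives the claim. *)

Set Implicit Arguments. Unset Strict Implicit. Unset Printing Implicit Defensive.
Import GRing.Theory Num.Theory.

Section StarInvolution.
Variables (A : algType algC) (star : A -> A).
Hypothesis star_inv : is_star star.

Lemma starD : {morph star : a b / a + b}. Proof. by case: star_inv. Qed.
Lemma starM a b : star (a * b) = star b * star a. Proof. by case: star_inv. Qed.
Lemma starK : involutive star. Proof. by case: star_inv. Qed.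
Lemma star1 : star 1 = 1. Proof. by case: star_inv. Qed.
Lemma star0 : star 0 = 0. Proof. by apply: (addrI (star 0)); rewrite -starD !addr0. Qed.

Lemma star_sum I r (P : pred I) (F : I -> A) :
  star (\sum_(i <- r | P i) F i) = \sum_(i <- r | P i) star (F i).
Proof. by apply: big_morph; [exact: starD | exact: star0]. Qed.

End StarInvolution.

Section IndicatorSums.
Variables (R : pzSemiRingType) (T : finType).
Implicit Types (P : pred T) (F : T -> R).

Lemma sumr_condl P F : \sum_(i | P i) F i = \sum_i (P i)%:R * F i.
Proof. by rewrite big_mkcond; apply: eq_bigr => i _; case: (P i); rewrite ?mul1r ?mul0r. Qed.

Lemma sumr_condr P F : \sum_(i | P i) F i = \sum_i F i * (P i)%:R.
Proof. by rewrite big_mkcond; apply: eq_bigr => i _; case: (P i); rewrite ?mulr1 ?mulr0. Qed.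

Lemma sumr_delta P x : \sum_(y | P y) ((y == x)%:R : R) = (P x)%:R.
Proof.
rewrite big_mkcond (bigD1 x) //= eqxx big1 ?addr0 => [|y /negbTE ->]; first by case: (P x).
by case: (P y).
Qed.

End IndicatorSums.

Definition ffun_cons (T : Type) k (x : T) (g : {ffun 'I_k -> T}) : {ffun 'I_k.+1 -> T} :=
  [ffun a => if unlift ord0 a is Some a' then g a' else x].

Lemma ffun_cons0 (T : Type) k (x : T) (g : {ffun 'I_k -> T}) : ffun_cons x g ord0 = x.
Proof. by rewrite ffunE unlift_none. Qed.

Lemma ffun_cons_lift (T : Type) k (x : T) (g : {ffun 'I_k -> T}) a :
  ffun_cons x g (lift ord0 a) = g a.
Proof. by rewrite ffunE liftK. Qed.

Lemma sum_ffun_ord0 (R : nmodType) (T : finType) (x : R) :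
  \sum_(g : {ffun 'I_0 -> T}) x = x.
Proof. by rewrite sumr_const card_ffun !card_ord. Qed.

Lemma sum_ffunS (R : nmodType) (T : finType) k (F : {ffun 'I_k.+1 -> T} -> R) :
  \sum_g F g = \sum_(x : T) \sum_(g : {ffun 'I_k -> T}) F (ffun_cons x g).
Proof.
rewrite pair_big /=; apply: (reindex (fun xg : T * {ffun 'I_k -> T} => ffun_cons xg.1 xg.2)).
exists (fun g : {ffun 'I_k.+1 -> T} => (g ord0, [ffun a => g (lift ord0 a)]))
  => [[x g] _ | g _] /=.
  by rewrite ffun_cons0; congr pair; apply/ffunP => a; rewrite ffunE ffun_cons_lift.
by apply/ffunP => a; rewrite ffunE; case: unliftP => [a'|] ->; rewrite ?ffunE.
Qed.

Lemma forall_ordS k (P : pred 'I_k.+1) :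
  [forall a, P a] = P ord0 && [forall a, P (lift ord0 a)].
Proof.
apply/forallP/andP => [HP | [P0 /forallP HP] a]; first by split=> //; apply/forallP.
by case: (unliftP ord0 a) => [a'|] ->.
Qed.

Lemma forall_ord0 (P : pred 'I_0) : [forall a, P a].
Proof. by apply/forallP => -[]. Qed.

Lemma prod_ffun_cons (R : pzSemiRingType) (T : Type) k (x : T) (g : {ffun 'I_k -> T})
    (f : 'I_k.+1 -> T -> R) :
  \prod_(a < k.+1) f a (ffun_cons x g a) = f ord0 x * \prod_(a < k) f (lift ord0 a) (g a).
Proof.
rewrite big_ord_recl ffun_cons0; congr (_ * _).
by apply: eq_bigr => a _; rewrite ffun_cons_lift.
Qed.

Lemma sum_ffun_ord0_cond (R : pzSemiRingType) (T : finType) (P : pred {ffun 'I_0 -> T})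
    (F : {ffun 'I_0 -> T} -> R) (s0 : {ffun 'I_0 -> T}) :
  \sum_(s | P s) F s = (P s0)%:R * F s0.
Proof.
have all_s0 s : s = s0 by apply/ffunP => -[].
rewrite sumr_condl (eq_bigr (fun _ => (P s0)%:R * F s0)) ?sum_ffun_ord0 // => s _.
by rewrite (all_s0 s).
Qed.

Lemma sum_ffun_const (R : nmodType) (T : finType) k (F : {ffun 'I_k.+1 -> T} -> R) :
  \sum_(g : {ffun 'I_k.+1 -> T} | [forall a, forall b, g a == g b]) F g
    = \sum_(x : T) F [ffun => x].
Proof.
rewrite (reindex_onto (fun x => [ffun => x]) (fun g : {ffun 'I_k.+1 -> T} => g ord0)).
  apply: eq_bigl => x; rewrite ffunE eqxx andbT.
  by apply/forallP => a; apply/forallP => b; rewrite !ffunE.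
move=> g /forallP g_const; apply/ffunP => a.
by rewrite ffunE; apply/eqP/(forallP (g_const ord0)).
Qed.

Lemma forall_eq_ord2 (T : eqType) (t : 'I_2 -> T) :
  [forall a, forall b, t a == t b] = (t ord0 == t ord_max).
Proof.
apply/forallP/eqP => [t_const | t01 a]; first exact/eqP/(forallP (t_const ord0)).
have t_ord0 (x : 'I_2) : t x = t ord0.
  by case: x => -[|[|//]] lt_x2; [|rewrite t01]; congr t; apply: val_inj.
by apply/forallP => b; rewrite !t_ord0.
Qed.

Definition ffun_pair (T : Type) (x y : T) : {ffun 'I_2 -> T} :=
  [ffun a => if val a == 0%N then x else y].

Lemma prod_ord2 (R : pzSemiRingType) (F : 'I_2 -> R) : \prod_(a < 2) F a = F ord0 * F ord_max.
Proof. by rewrite !big_ord_recl big_ord0 mulr1; congr (_ * F _); apply: val_inj. Qed.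

Lemma forall_eq_ffun (I : finType) (T : eqType) (f g : {ffun I -> T}) :
  [forall i, f i == g i] = (f == g).
Proof. by apply/eqfunP/eqP => [/ffunP | ->]. Qed.

Section TensorUnitary.
Variables (A : algType algC) (star : A -> A) (N : nat).
Hypothesis star_inv : is_star star.

Lemma tensor_coisometry k (F : 'I_k -> 'I_N -> 'I_N -> A) :
    (forall a i i', \sum_j F a i j * star (F a i' j) = (i == i')%:R) ->
  forall s s' : 'I_k -> 'I_N,
  \sum_(g : {ffun 'I_k -> 'I_N}) (\prod_a F a (s a) (g a)) * star (\prod_a F a (s' a) (g a))
    = [forall a, s a == s' a]%:R.
Proof.
elim: k F => [|k IH] F F_coiso s s'.
  under eq_bigr do rewrite !big_ord0 (star1 star_inv) mulr1.
  by rewrite sum_ffun_ord0 forall_ord0.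
rewrite sum_ffunS forall_ordS -mulnb natrM -(F_coiso ord0) mulr_suml.
apply: eq_bigr => x _.
under eq_bigr => g _ do rewrite (prod_ffun_cons _ _ (fun a => F a (s a)))
  (prod_ffun_cons _ _ (fun a => F a (s' a))) (starM star_inv) mulrA -(mulrA (F _ _ _)).
rewrite -mulr_suml -mulr_sumr (IH (fun a => F (lift ord0 a)) (fun a => F_coiso _)).
by rewrite -!mulrA commr_nat.
Qed.

Lemma tensor_isometry k (F : 'I_k -> 'I_N -> 'I_N -> A) :
    (forall a i i', \sum_j star (F a j i) * F a j i' = (i == i')%:R) ->
  forall t t' : 'I_k -> 'I_N,
  \sum_(g : {ffun 'I_k -> 'I_N}) star (\prod_a F a (g a) (t a)) * \prod_a F a (g a) (t' a)
    = [forall a, t a == t' a]%:R.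
Proof.
elim: k F => [|k IH] F F_iso t t'.
  under eq_bigr do rewrite !big_ord0 (star1 star_inv) mulr1.
  by rewrite sum_ffun_ord0 forall_ord0.
rewrite sum_ffunS exchange_big forall_ordS -mulnb natrM.
rewrite -(IH (fun a => F (lift ord0 a)) (fun a => F_iso _)) mulr_sumr.
apply: eq_bigr => g _.
under eq_bigr => x _ do rewrite (prod_ffun_cons _ _ (fun a i => F a i (t a)))
  (prod_ffun_cons _ _ (fun a i => F a i (t' a))) (starM star_inv) -mulrA [X in _ * X]mulrA.
by rewrite -mulr_sumr -mulr_suml (F_iso ord0) mulrA commr_nat -mulrA.
Qed.
End TensorUnitary.

Section IntertwinerTranspose.
Variables (A : algType algC) (star : A -> A) (I J : finType).
Variables (D : I -> J -> bool) (U : I -> I -> A) (L : J -> J -> A).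
Hypotheses (star_inv : is_star star)
  (intertwines : forall g g', \sum_(t | D t g') U t g = \sum_(t' | D g t') L g' t')
  (U_coiso : forall s s', \sum_g U s g * star (U s' g) = (s == s')%:R)
  (L_iso : forall t t', \sum_g star (L g t) * L g t' = (t == t')%:R).

Lemma intertwiner_transpose g0 t' :
  \sum_(g' | D g0 g') L g' t' = \sum_(g | D g t') U g0 g.
Proof.
have U_rows g' : \sum_g U g0 g * star (\sum_(s | D s g') U s g) = (D g0 g')%:R.
  under eq_bigr do rewrite (star_sum star_inv) mulr_sumr.
  rewrite exchange_big /= -(sumr_delta _ (D^~ g')).
  by apply: eq_bigr => s _; rewrite U_coiso eq_sym.
have L_cols g : \sum_(s | D g s) \sum_g' star (L g' s) * L g' t' = (D g t')%:R.
  by under eq_bigr do rewrite L_iso; rewrite sumr_delta.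
rewrite [LHS]sumr_condl [RHS]sumr_condr.
under eq_bigr => g' _ do rewrite -U_rows mulr_suml.
under [RHS]eq_bigr => g _ do rewrite -L_cols.
rewrite exchange_big; apply: eq_bigr => g _.
rewrite exchange_big mulr_sumr; apply: eq_bigr => g' _.
rewrite intertwines (star_sum star_inv) !mulr_sumr mulr_suml.
by apply: eq_bigr => s _; rewrite mulrA.
Qed.
End IntertwinerTranspose.

Lemma double_count (F : numFieldType) (V : lmodType F) (I J : finType)
    (P : pred I) (Q : pred J) (X : I -> J -> V) (a b : V) :
    #|P| = #|Q| -> (0 < #|Q|)%N ->
    (forall i, P i -> \sum_(j | Q j) X i j = a) ->
    (forall j, Q j -> \sum_(i | P i) X i j = b) ->
  a = b.
Proof.
move=> card_PQ Q_gt0 rowP colQ.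
apply: (scalerI (a := #|Q|%:R)); first by rewrite pnatr_eq0 -lt0n.
rewrite !scaler_nat -{1}card_PQ -!sumr_const.
transitivity (\sum_(i | P i) \sum_(j | Q j) X i j); first by apply: eq_bigr => i /rowP.
by rewrite exchange_big; apply: eq_bigr => j /colQ.
Qed.

Section Blocks.
Variable p : tcpart.

Lemma sameblkC x y : sameblk p x y = sameblk p y x.
Proof. exact: eq_sym. Qed.

Lemma through_sameblk x y : sameblk p x y -> through p x = through p y.
Proof. by rewrite /sameblk => /eqP E; rewrite /through /sameblk E. Qed.

Lemma exists_upt_in_block x : through p x -> exists a, sameblk p (upt a) x.
Proof. by case/andP => /existsP. Qed.

Lemma exists_lpt_in_block x : through p x -> exists b, sameblk p (lpt b) x.
Proof. by case/andP => _ /existsP. Qed.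

Lemma through_upt_sameblk a b : sameblk p (upt a) (lpt b) -> through p (upt a).
Proof.
move=> ab; apply/andP; split; apply/existsP; first by exists a; rewrite /sameblk.
by exists b; rewrite sameblkC.
Qed.

End Blocks.

Section Rows.
Variables (N : nat) (p : tcpart) (I : finType) (pt : I -> 'I_(tk p + tl p)).
Implicit Types (c d : 'I_(tk p + tl p) -> option 'I_N) (t : I -> 'I_N).

Definition valid_row t := [forall i, forall j, sameblk p (pt i) (pt j) ==> (t i == t j)].
Definition labels_as c t := [forall i, through p (pt i) ==> (c (pt i) == Some (t i))].
(* For pt = upt (resp. lpt), in_row pt c is inT_up p c (resp. inT_lo p c), by conversion. *)
Definition in_row c t := valid_row t && labels_as c t.

Definition relabel d (t : {ffun I -> 'I_N}) : {ffun I -> 'I_N} :=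
  [ffun i => odflt (t i) (d (pt i))].

Lemma in_row_relabel d (t : {ffun I -> 'I_N}) :
  assignment p d -> valid_row t -> in_row d (relabel d t).
Proof.
move=> [d_dom d_blk] /forallP t_valid; apply/andP; split.
  apply/forallP => i; apply/forallP => j; apply/implyP => ij.
  rewrite !ffunE (d_blk _ _ ij); case: (d (pt j)) => //=.
  exact: (implyP (forallP (t_valid i) j)).
apply/forallP => i; apply/implyP => thr; rewrite ffunE.
by move: (d_dom (pt i)); rewrite thr; case: (d (pt i)).
Qed.

Lemma relabelK c d (t : {ffun I -> 'I_N}) :
  assignment p c -> assignment p d -> in_row c t -> relabel c (relabel d t) = t.
Proof.
move=> [c_dom _] [d_dom _] /andP [_ /forallP t_lab]; apply/ffunP => i; rewrite !ffunE.
case thr: (through p (pt i)); first by rewrite (eqP (implyP (t_lab i) thr)).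
by move: (c_dom (pt i)) (d_dom (pt i)); rewrite thr; case: (c (pt i)); case: (d (pt i)).
Qed.

Lemma card_in_row c d : assignment p c -> assignment p d ->
  #|[pred t : {ffun I -> 'I_N} | in_row c t]| = #|[pred t : {ffun I -> 'I_N} | in_row d t]|.
Proof.
suff le_card c' d' : assignment p c' -> assignment p d' ->
    (#|[pred t : {ffun I -> 'I_N} | in_row c' t]|
       <= #|[pred t : {ffun I -> 'I_N} | in_row d' t]|)%N.
  by move=> Ac Ad; apply/eqP; rewrite eqn_leq !le_card.
move=> Ac Ad; rewrite -(@card_in_image _ _ (relabel d')) => [|t t' ct ct' E].
  apply/subset_leq_card/subsetP => _ /imageP [t /andP [t_valid _] ->].
  exact: in_row_relabel.
by rewrite -(relabelK Ac Ad ct) E relabelK.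
Qed.

Lemma exists_assignment t :
    (forall x, through p x -> exists i, sameblk p (pt i) x) -> valid_row t ->
  exists2 c, assignment p c & in_row c t.
Proof.
move=> reach t_valid.
pose c x := if through p x then omap t [pick i | sameblk p (pt i) x] else None.
have c_pt i : through p (pt i) -> c (pt i) = Some (t i).
  rewrite /c => ->; case: pickP => [j ji | /(_ i)]; last by rewrite /sameblk eqxx.
  by rewrite /= (eqP (implyP (forallP (forallP t_valid j) i) ji)).
exists c; last by rewrite /in_row t_valid; apply/forallP => i; apply/implyP => /c_pt ->.
split=> [x | x y xy].
  rewrite /c; case: ifP => // /reach [i ix]; case: pickP => // /(_ i).
  by rewrite ix.
rewrite /c (through_sameblk xy); congr (if _ then omap t _ else _).
by apply: eq_pick => i; rewrite /sameblk (eqP xy).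
Qed.

End Rows.

Section JointLabelings.
Variables (N : nat) (p : tcpart).
Implicit Types (c : 'I_(tk p + tl p) -> option 'I_N).
Implicit Types (t : {ffun 'I_(tk p) -> 'I_N}) (s : {ffun 'I_(tl p) -> 'I_N}).

Definition agree_across t s :=
  [forall a, forall b, sameblk p (upt a) (lpt b) ==> (t a == s b)].

Definition joint_valid t s := [&& valid_up p t, valid_lo p s & agree_across t s].

Lemma joint_valid_up t s : joint_valid t s -> valid_up p t.
Proof. by case/and3P. Qed.

Lemma joint_valid_lo t s : joint_valid t s -> valid_lo p s.
Proof. by case/and3P. Qed.

Lemma agree_across_labels c t s : assignment p c ->
  labels_as (@upt p) c t -> labels_as (@lpt p) c s -> agree_across t s.
Proof.
move=> [_ c_blk] /forallP t_lab /forallP s_lab.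
apply/forallP => a; apply/forallP => b; apply/implyP => ab.
have thr_a := through_upt_sameblk ab.
have thr_b : through p (lpt b) by rewrite -(through_sameblk ab).
move: (c_blk _ _ ab); rewrite (eqP (implyP (t_lab a) thr_a)) (eqP (implyP (s_lab b) thr_b)).
by case=> ->.
Qed.

Lemma inT_up_joint c t s : assignment p c -> inT_lo p c s -> inT_up p c t = joint_valid t s.
Proof.
move=> Ac /andP [s_valid s_lab]; rewrite /joint_valid s_valid /=.
apply/andP/andP => [[t_valid t_lab] | [t_valid agree]].
  by split=> //; apply: agree_across_labels Ac t_lab s_lab.
split=> //; apply/forallP => a; apply/implyP => thr_a.
have [b ba] := exists_lpt_in_block thr_a.
have thr_b : through p (lpt b) by rewrite (through_sameblk ba).
case: Ac => _ c_blk; rewrite -(c_blk _ _ ba) (eqP (implyP (forallP s_lab b) thr_b)).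
by rewrite sameblkC in ba; rewrite (eqP (implyP (forallP (forallP agree a) b) ba)).
Qed.

Lemma inT_lo_joint c t s : assignment p c -> inT_up p c t -> inT_lo p c s = joint_valid t s.
Proof.
move=> Ac /andP [t_valid t_lab]; rewrite /joint_valid t_valid /=.
apply/andP/andP => [[s_valid s_lab] | [s_valid agree]].
  by split=> //; apply: agree_across_labels Ac t_lab s_lab.
split=> //; apply/forallP => b; apply/implyP => thr_b.
have [a ab] := exists_upt_in_block thr_b.
have thr_a : through p (upt a) by rewrite (through_sameblk ab).
case: Ac => _ c_blk; rewrite -(c_blk _ _ ab) (eqP (implyP (forallP t_lab a) thr_a)).
by rewrite (eqP (implyP (forallP (forallP agree a) b) ab)).
Qed.

End JointLabelings.

Section Intertwiner.
Variables (N : nat) (A : algType algC) (star : A -> A) (u : 'I_N -> 'I_N -> A) (p : tcpart).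

Definition u_up (t g : {ffun 'I_(tk p) -> 'I_N}) :=
  \prod_(a < tk p) pw star (tup p a) (u (t a) (g a)).
Definition u_lo (g s : {ffun 'I_(tl p) -> 'I_N}) :=
  \prod_(b < tl p) pw star (tlo p b) (u (g b) (s b)).

Lemma RGr_intertwines : RGr star u p ->
  forall g g', \sum_(t | joint_valid t g') u_up t g = \sum_(s | joint_valid g s) u_lo g' s.
Proof.
case=> rel_i rel_ii rel_iii g g'.
have [g_valid | g_invalid] := boolP (valid_up p g); last first.
  rewrite [RHS]big_pred0 => [|s]; last exact: contraNF (@joint_valid_up _ _ g s) g_invalid.
  have [g'_valid | g'_invalid] := boolP (valid_lo p g'); last first.
    by rewrite big_pred0 // => t; exact: contraNF (@joint_valid_lo _ _ t g') g'_invalid.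
  have [c Ac g'_in] := exists_assignment (@exists_lpt_in_block p) g'_valid.
  rewrite -(eq_bigl _ _ (fun t => inT_up_joint t Ac g'_in)).
  exact: rel_ii.
have [d Ad g_in] := exists_assignment (@exists_upt_in_block p) g_valid.
rewrite -(eq_bigl _ _ (fun s => inT_lo_joint s Ad g_in)).
have [g'_valid | g'_invalid] := boolP (valid_lo p g'); last first.
  rewrite [LHS]big_pred0 => [|t]; last exact: contraNF (@joint_valid_lo _ _ t g') g'_invalid.
  by rewrite rel_iii.
have [c Ac g'_in] := exists_assignment (@exists_lpt_in_block p) g'_valid.
rewrite -(eq_bigl _ _ (fun t => inT_up_joint t Ac g'_in)).
exact: rel_i.
Qed.

End Intertwiner.

Section MixedPairs.
Variables (N : nat) (A : algType algC) (star : A -> A) (u : 'I_N -> 'I_N -> A).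
Hypothesis star_inv : is_star star.

Lemma pair_lo_unitary c i i' : RGr star u (pair_lo c) ->
  \sum_j pw star (c ord0) (u i j) * pw star (c ord_max) (u i' j) = (i == i')%:R.
Proof.
set t0 : {ffun 'I_0 -> 'I_N} := [ffun => i].
have joint_t0 (s : {ffun 'I_2 -> 'I_N}) :
    @joint_valid _ (pair_lo c) t0 s = [forall a, forall b, s a == s b].
  by apply/and3P/idP => [[] // | s_const]; split=> //; apply/forallP => -[].
move/RGr_intertwines/(_ t0 (ffun_pair i i')).
rewrite (sum_ffun_ord0_cond _ _ t0) /u_up big_ord0 mulr1 joint_t0 forall_eq_ord2 !ffunE /=.
rewrite (eq_bigl _ _ joint_t0) sum_ffun_const => ->.
by apply: eq_bigr => j _; rewrite /u_lo prod_ord2 !ffunE.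
Qed.

Lemma pair_up_unitary c i i' : RGr star u (pair_up c) ->
  \sum_j pw star (c ord0) (u j i) * pw star (c ord_max) (u j i') = (i == i')%:R.
Proof.
set s0 : {ffun 'I_0 -> 'I_N} := [ffun => i].
have joint_s0 (t : {ffun 'I_2 -> 'I_N}) :
    @joint_valid _ (pair_up c) t s0 = [forall a, forall b, t a == t b].
  apply/and3P/idP => [[] // | t_const]; split=> //; first by apply/forallP => -[].
  by apply/forallP => a; apply/forallP => -[].
move/RGr_intertwines/(_ (ffun_pair i i') s0).
rewrite [RHS](sum_ffun_ord0_cond _ _ s0) /u_lo big_ord0 mulr1 joint_s0 forall_eq_ord2 !ffunE /=.
rewrite (eq_bigl _ _ joint_s0) sum_ffun_const => <-.
by apply: eq_bigr => j _; rewrite /u_up prod_ord2 !ffunE.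
Qed.

Lemma row_unitary : RGr star u (pair_lo col_wb) -> RGr star u (pair_lo col_bw) ->
  forall w i i', \sum_j pw star w (u i j) * star (pw star w (u i' j)) = (i == i')%:R.
Proof.
move=> wb bw [] i i'; [rewrite -(pair_lo_unitary i i' bw) | rewrite -(pair_lo_unitary i i' wb)];
  by apply: eq_bigr => j _; rewrite /pw /= ?(starK star_inv).
Qed.

Lemma col_unitary : RGr star u (pair_up col_wb) -> RGr star u (pair_up col_bw) ->
  forall w i i', \sum_j star (pw star w (u j i)) * pw star w (u j i') = (i == i')%:R.
Proof.
move=> wb bw [] i i'; [rewrite -(pair_up_unitary i i' wb) | rewrite -(pair_up_unitary i i' bw)];
  by apply: eq_bigr => j _; rewrite /pw /= ?(starK star_inv).
Qed.

End MixedPairs.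

Section FirstColumn.
Variables (N : nat) (A : algType algC) (star : A -> A) (u : 'I_N -> 'I_N -> A) (p : tcpart).
Hypotheses (star_inv : is_star star) (u_p : RGr star u p)
  (u_row : forall w i i', \sum_j pw star w (u i j) * star (pw star w (u i' j)) = (i == i')%:R)
  (u_col : forall w i i', \sum_j star (pw star w (u j i)) * pw star w (u j i') = (i == i')%:R).

Lemma u_up_coisometry (s s' : {ffun 'I_(tk p) -> 'I_N}) :
  \sum_g u_up star u s g * star (u_up star u s' g) = (s == s')%:R.
Proof. by rewrite -forall_eq_ffun -(tensor_coisometry star_inv (fun a => u_row (tup p a))). Qed.

Lemma u_lo_isometry (s s' : {ffun 'I_(tl p) -> 'I_N}) :
  \sum_g star (u_lo star u g s) * u_lo star u g s' = (s == s')%:R.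
Proof. by rewrite -forall_eq_ffun -(tensor_isometry star_inv (fun b => u_col (tlo p b))). Qed.

Lemma RGr_transpose c d g0 s : assignment p c -> assignment p d ->
    inT_up p c g0 -> inT_lo p d s ->
  \sum_(g' | inT_lo p c g') u_lo star u g' s = \sum_(g | inT_up p d g) u_up star u g0 g.
Proof.
move=> Ac Ad g0_in s_in.
rewrite (eq_bigl _ _ (fun g' => inT_lo_joint g' Ac g0_in)).
rewrite (eq_bigl _ _ (fun g => inT_up_joint g Ad s_in)).
exact: (intertwiner_transpose star_inv (RGr_intertwines u_p) u_up_coisometry u_lo_isometry).
Qed.

Lemma RSp_first_column (o : 'I_N) : RSp star (fun i => u i o) p.
Proof.
move=> c Ac; set ou : {ffun 'I_(tk p) -> 'I_N} := [ffun => o].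
set ol : {ffun 'I_(tl p) -> 'I_N} := [ffun => o].
have ou_valid : valid_up p ou.
  by apply/forallP => a; apply/forallP => a'; rewrite !ffunE eqxx implybT.
have [c1 Ac1 ou_in] := exists_assignment (@exists_upt_in_block p) ou_valid.
have ol_in : inT_lo p c1 ol.
  rewrite (inT_lo_joint ol Ac1 ou_in); apply/and3P; split=> //;
  by apply/forallP => b; apply/forallP => b'; rewrite !ffunE eqxx implybT.
have g0_in : inT_up p c (relabel (@upt p) c ou) := in_row_relabel Ac ou_valid.
transitivity (\sum_(t | inT_up p c t) u_up star u t ou).
  by apply: eq_bigr => t _; apply: eq_bigr => a _; rewrite ffunE.
transitivity (\sum_(s | inT_lo p c s) u_lo star u s ol); last first.
  by apply: eq_bigr => s _; apply: eq_bigr => b _; rewrite ffunE.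
apply: (double_count (P := inT_lo p c) (Q := inT_lo p c1) (X := @u_lo _ _ star u p)).
- exact: card_in_row Ac Ac1.
- by apply/card_gt0P; exists ol.
- by move=> g' g'_in; case: u_p => rel_i _ _; rewrite (rel_i _ _ Ac Ac1 ou g').
- move=> s s_in.
  by rewrite (RGr_transpose Ac Ac1 g0_in s_in) (RGr_transpose Ac Ac1 g0_in ol_in).
Qed.
End FirstColumn.

Theorem theorem4p6 (N : nat) (hN : (0 < N)%N) (Pi : tcpart -> Prop)
  (Hwb_up : Pi (pair_up col_wb)) (Hbw_up : Pi (pair_up col_bw))
  (Hwb_lo : Pi (pair_lo col_wb)) (Hbw_lo : Pi (pair_lo col_bw))
  (A : algType algC) (star : A -> A) (Hstar : is_star star)
  (u : 'I_N -> 'I_N -> A) (Hu : forall p, Pi p -> RGr star u p) :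
  forall p, Pi p -> RSp star (fun i => u i (Ordinal hN)) p.
Proof.
move=> p Pp.
have u_row := row_unitary Hstar (Hu _ Hwb_lo) (Hu _ Hbw_lo).
have u_col := col_unitary Hstar (Hu _ Hwb_up) (Hu _ Hbw_up).
exact: RSp_first_column Hstar (Hu _ Pp) u_row u_col (Ordinal hN).
Qed.
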